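(* For $a\in\mathcal{A}'$ write $\overline{a}=a+\mathrm{II}\in\mathcal{A}'/\mathrm{II}$. Then for all $a\in\mathcal{A}'$, all $i,j\in\{1,\dots,n\}$ and every rational function $\phi(t)$ with $\phi(H)\in\mathcal{A}'$: \begin{align*} \overline{a}\diamond\overline{\partial_j}&=\overline{a\partial_j}, & \overline{x^i}\diamond\overline{a}&=\overline{x^ia},\\ \overline{\partial_i}\diamond\overline{\gamma^j}&=\overline{\partial_i\gamma^j-\varphi_1(H-1)\gamma_i\partial^j}, & \overline{\gamma^i}\diamond\overline{\gamma^j}&=\overline{\gamma^i\gamma^j-2\varphi_1(H)x^i\partial^j},\\ \overline{\partial_i}\diamond\overline{x^j}&=\overline{\partial_ix^j-\tfrac{\varphi_1(H-1)}{2}\gamma_i\gamma^j+\varphi_2(H-1)x_i\partial^j}, & \overline{\gamma^i}\diamond\overline{x^j}&=\overline{\gamma^ix^j-\varphi_1(H)x^i\gamma^j},\\ \overline{\phi(H)}\diamond\overline{a}&=\overline{\phi(H)a}, & \overline{a}\diamond\overline{\phi(H)}&=\overline{a\phi(H)}. \end{align*}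
   Context: Fix $n\ge1$ and an invertible complex matrix $\eta=(\eta^{ij})$ with $\eta^{ij}=\eta^{ji}$ and inverse $(\eta_{ij})$. $\mathcal{A}=W(2n|n)$ is the associative superalgebra generated by even $x^1,\dots,x^n,\partial_1,\dots,\partial_n$ and odd $\gamma^1,\dots,\gamma^n$ with relations $x^ix^j=x^jx^i$, $\partial_i\partial_j=\partial_j\partial_i$, $\partial_ix^j-x^j\partial_i=\delta_i^j$, $\gamma^i$ commuting with all $x^j,\partial_j$, $\gamma^i\gamma^j+\gamma^j\gamma^i=2\eta^{ij}$. Repeated indices are summed; $x_i=\eta_{ij}x^j$, $\partial^i=\eta^{ij}\partial_j$, $\gamma_i=\eta_{ij}\gamma^j$. Set $X=\frac{\sqrt{-1}}{\sqrt2}\gamma^i\partial_i$, $Y=\frac{\sqrt{-1}}{\sqrt2}\gamma^ix_i$, $H=-\frac12(\partial_ix^i+x^i\partial_i)$, $E=-\frac12\partial^i\partial_i$, $F=\frac12x^ix_i$. Let $\mathcal{A}'$ be the localization of $\mathcal{A}$ at the multiplicative set generated by $\{H+k:k\in\mathbb{Z}\}$, and $\mathrm{II}:=Y\mathcal{A}'+F\mathcal{A}'+\mathcal{A}'X+\mathcal{A}'E$. Define $\kappa_k(t)=-k/2$ for $k$ even and $\kappa_k(t)=t+\frac{k+1}{2}$ for $k$ odd, and $\varphi_n(t)=\prod_{k=1}^n\frac{(-1)^k}{\kappa_k(t)}$ (so $\varphi_0=1$, $\varphi_1(t)=-\frac1{t+1}$, $\varphi_2(t)=\frac1{t+1}$).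 The diamond product on $\mathcal{A}'/\mathrm{II}$ is $\overline a\diamond\overline b:=\sum_{k\ge0}a\,\varphi_k(H)Y^kX^k\,b+\mathrm{II}$, where all but finitely many summands lie in $\mathrm{II}$ (as $X$ acts locally nilpotently). *)

(* Scalars: algC (algebraic complex numbers, containing
   sqrt(-1) and sqrt 2).  The superalgebra A' = W(2n|n) localized at
   {H+k : k in Z} is presented by generators and relations:
   terms of the free C-algebra on x^i, d_i, g^i (0-based i : 'I_n) and
   u_k (k : int, standing for (H+k)^{-1}), modulo the smallest congruence
   [teq] containing the unital associative C-algebra axioms and the
   defining relations of W(2n|n) together with u_k (H+k) = (H+k) u_k = 1.
   (Universally inverting a set of elements is the same as the Ore
   localization when the latter exists, by its universal property.) *)
From HB Require Import structures.
From mathcomp Require Import all_boot all_order all_algebra all_field.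
Set Implicit Arguments. Unset Strict Implicit. Unset Printing Implicit Defensive.
Import Order.TTheory GRing.Theory Num.Theory.
Local Open Scope ring_scope.

Section WeylClifford.
Variable n : nat.

Inductive term : Type :=
| tS of algC
| tx of 'I_n
| td of 'I_n
| tg of 'I_n
| tu of int
| tadd of term & term
| tmul of term & term.

Definition tscale (c : algC) (a : term) := tmul (tS c) a.
Definition tsub (a b : term) := tadd a (tscale (-1) b).
Definition tpow (a : term) (k : nat) := iter k (tmul a) (tS 1).
Definition tsum (f : 'I_n -> term) :=
  foldr (fun i acc => tadd (f i) acc) (tS 0) (enum 'I_n).
Definition tsumn (N : nat) (f : nat -> term) :=
  foldr (fun k acc => tadd (f k) acc) (tS 0) (iota 0 N).

Definition Hterm : term :=
  tscale (-1/2) (tsum (fun i => tadd (tmul (td i) (tx i)) (tmul (tx i) (td i)))).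

Variable eta : 'M[algC]_n.
Definition etainv := invmx eta.

Definition xlow (i : 'I_n) := tsum (fun j => tscale (etainv i j) (tx j)).
Definition glow (i : 'I_n) := tsum (fun j => tscale (etainv i j) (tg j)).
Definition dup  (i : 'I_n) := tsum (fun j => tscale (eta i j) (td j)).

Definition Xterm := tscale ('i / sqrtC 2) (tsum (fun i => tmul (tg i) (td i))).
Definition Yterm := tscale ('i / sqrtC 2) (tsum (fun i => tmul (tg i) (xlow i))).
Definition Eterm := tscale (-1/2) (tsum (fun i => tmul (dup i) (td i))).
Definition Fterm := tscale (1/2) (tsum (fun i => tmul (tx i) (xlow i))).

Inductive teq : term -> term -> Prop :=
| teq_refl a : teq a a
| teq_sym a b : teq a b -> teq b a
| teq_trans a b c : teq a b -> teq b c -> teq a c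
| teq_add a a' b b' : teq a a' -> teq b b' -> teq (tadd a b) (tadd a' b')
| teq_mul a a' b b' : teq a a' -> teq b b' -> teq (tmul a b) (tmul a' b')
| teq_addA a b c : teq (tadd a (tadd b c)) (tadd (tadd a b) c)
| teq_addC a b : teq (tadd a b) (tadd b a)
| teq_add0 a : teq (tadd (tS 0) a) a
| teq_addN a : teq (tadd a (tscale (-1) a)) (tS 0)
| teq_mulA a b c : teq (tmul a (tmul b c)) (tmul (tmul a b) c)
| teq_mul1l a : teq (tmul (tS 1) a) a
| teq_mul1r a : teq (tmul a (tS 1)) a
| teq_mulDl a b c : teq (tmul (tadd a b) c) (tadd (tmul a c) (tmul b c))
| teq_mulDr a b c : teq (tmul a (tadd b c)) (tadd (tmul a b) (tmul a c))
| teq_SD c d : teq (tS (c + d)) (tadd (tS c) (tS d))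
| teq_SM c d : teq (tS (c * d)) (tmul (tS c) (tS d))
| teq_Scentral c a : teq (tmul (tS c) a) (tmul a (tS c))
| teq_xx i j : teq (tmul (tx i) (tx j)) (tmul (tx j) (tx i))
| teq_dd i j : teq (tmul (td i) (td j)) (tmul (td j) (td i))
| teq_dx i j : teq (tsub (tmul (td i) (tx j)) (tmul (tx j) (td i))) (tS (i == j)%:R)
| teq_gx i j : teq (tmul (tg i) (tx j)) (tmul (tx j) (tg i))
| teq_gd i j : teq (tmul (tg i) (td j)) (tmul (td j) (tg i))
| teq_gg i j : teq (tadd (tmul (tg i) (tg j)) (tmul (tg j) (tg i))) (tS (2 * eta i j))
| teq_ul k : teq (tmul (tu k) (tadd Hterm (tS k%:~R))) (tS 1)
| teq_ur k : teq (tmul (tadd Hterm (tS k%:~R)) (tu k)) (tS 1).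

Definition inII (t : term) : Prop :=
  exists p q r s, teq t (tadd (tadd (tmul Yterm p) (tmul Fterm q))
                              (tadd (tmul r Xterm) (tmul s Eterm))).

Definition qeq (a b : term) : Prop := inII (tsub a b).

(* kappa_k(H + m)^{-1} *)
Definition kinv (k : nat) (m : int) : term :=
  if odd k then tu (m + (k.+1./2)%:Z) else tS ((- (k./2)%:R)^-1).
(* varphi_k(H + m) = prod_{k'=1}^k (-1)^{k'} / kappa_{k'}(H + m) *)
Definition phiH (m : int) (k : nat) : term :=
  foldr (fun k' acc => tmul (tmul (tS ((-1) ^+ k')) (kinv k' m)) acc)
        (tS 1) (iota 1 k).

(* k-th summand of the diamond product: a varphi_k(H) Y^k X^k b *)
Definition dterm (a b : term) (k : nat) : term :=
  tmul (tmul (tmul (tmul a (phiH 0 k)) (tpow Yterm k)) (tpow Xterm k)) b.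

(* [diamond_is a b c] : all but finitely many summands lie in II and
   abar <> bbar = cbar *)
Definition diamond_is (a b c : term) : Prop :=
  exists N, (forall k, (N <= k)%N -> inII (dterm a b k)) /\
            qeq (tsumn N (dterm a b)) c.

Definition polyH (p : {poly algC}) : term :=
  tsumn (size p) (fun i => tscale p`_i (tpow Hterm i)).
(* the rational function phi(t) = p(t) / prod_{k in s} (t + k), evaluated at H *)
Definition ratH (p : {poly algC}) (s : seq int) : term :=
  tmul (polyH p) (foldr (fun k acc => tmul (tu k) acc) (tS 1) s).

End WeylClifford.

(* Modulo II every summand a phi_k(H) Y^k X^k b of the diamond product that
   ends in A'X or begins with YA' vanishes.  The generators are graded by H:
   a H = (H + m) a with m = 1 for x^i and Y, m = -1 for d_i and X, and m = 0
   for gamma^i, so the elements (H + k)^-1 can be pushed past X from the right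
   and past Y from the left at the cost of shifting k, and rational functions
   of H normalise the one-sided ideals A'X and YA'.  Hence only k = 0 survives
   for b = d_j, for a = x^i and for rational functions of H; the terms with
   k >= 2 die for (d_i, gamma^j) and (gamma^i, gamma^j) since X^2 gamma^j lies
   in A'X, those with k >= 3 for (d_i, x^j) since X^3 x^j lies in A'X, and those
   with k >= 2 for (gamma^i, x^j) since gamma^i phi(H) Y^2 lies in YA'.  The
   surviving terms are computed from
     [X, x^j] = c gamma^j,   X gamma^j + gamma^j X = 2 c d^j,
     [d_i, Y] = c gamma_i,   gamma^i Y + Y gamma^i = 2 c x^i,
   where c = sqrt(-1)/sqrt 2, so that c^2 = -1/2. *)

From HB Require Import structures.
From mathcomp Require Import all_boot all_order all_algebra all_field.
From mathcomp Require Import boolp ring.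
From Stdlib Require Import Setoid Morphisms.
Import Order.TTheory GRing.Theory Num.Theory.
Local Open Scope ring_scope.
Set Implicit Arguments. Unset Strict Implicit. Unset Printing Implicit Defensive.

Section Idealizers.
Variable R : pzRingType.

Definition lidealizer (e : R) : {pred R} :=
  fun z => `[< exists z', e * z = z' * e >].
Definition ridealizer (e : R) : {pred R} :=
  fun z => `[< exists z', z * e = e * z' >].

Lemma lidealizerP e z : reflect (exists z', e * z = z' * e) (z \in lidealizer e).
Proof. exact: asboolP. Qed.
Lemma ridealizerP e z : reflect (exists z', z * e = e * z') (z \in ridealizer e).
Proof. exact: asboolP. Qed.

Lemma lidealizer_subring_closed e : subring_closed (lidealizer e).
Proof.
split; first by apply/lidealizerP; exists 1; rewrite mulr1 mul1r.
- move=> a b /lidealizerP[a' ea] /lidealizerP[b' eb]; apply/lidealizerP.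
  by exists (a' - b'); rewrite mulrBr mulrBl ea eb.
- move=> a b /lidealizerP[a' ea] /lidealizerP[b' eb]; apply/lidealizerP.
  by exists (a' * b'); rewrite mulrA ea -mulrA eb mulrA.
Qed.
Lemma ridealizer_subring_closed e : subring_closed (ridealizer e).
Proof.
split; first by apply/ridealizerP; exists 1; rewrite mulr1 mul1r.
- move=> a b /ridealizerP[a' ea] /ridealizerP[b' eb]; apply/ridealizerP.
  by exists (a' - b'); rewrite mulrBr mulrBl ea eb.
- move=> a b /ridealizerP[a' ea] /ridealizerP[b' eb]; apply/ridealizerP.
  by exists (a' * b'); rewrite -mulrA eb mulrA ea mulrA.
Qed.

HB.instance Definition _ e :=
  GRing.isSubringClosed.Build R (lidealizer e) (lidealizer_subring_closed e).
HB.instance Definition _ e :=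
  GRing.isSubringClosed.Build R (ridealizer e) (ridealizer_subring_closed e).

Lemma lidealizer_comm e z : GRing.comm e z -> z \in lidealizer e.
Proof. by move=> cez; apply/lidealizerP; exists z. Qed.
Lemma ridealizer_comm e z : GRing.comm e z -> z \in ridealizer e.
Proof. by move=> cez; apply/ridealizerP; exists z. Qed.

Lemma mulr_expr_lideal (e b b' c : R) m k : e ^+ m * b = b' * e -> (m <= k)%N ->
  c * e ^+ k * b = (c * e ^+ (k - m) * b') * e.
Proof.
by move=> eb leq_mk; rewrite -!mulrA -eb [e ^+ (k - m) * _]mulrA -exprD subnK.
Qed.
Lemma mulr_expr_rideal (e b b' c : R) m k : b * e ^+ m = e * b' -> (m <= k)%N ->
  b * e ^+ k * c = e * (b' * e ^+ (k - m) * c).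
Proof.
move=> be leq_mk; rewrite !mulrA -be.
by rewrite -(mulrA b (e ^+ m)) -exprD subnKC.
Qed.

End Idealizers.

Section Shifts.
Variables (R : pzRingType) (h : R).

Definition shifts (m : int) (a : R) := a * h = (h + m%:~R) * a.

Lemma shifts_comm a : GRing.comm a h -> shifts 0 a.
Proof. by rewrite /shifts addr0. Qed.

Lemma shiftsD m a b : shifts m a -> shifts m b -> shifts m (a + b).
Proof. by rewrite /shifts => ha hb; rewrite mulrDl ha hb mulrDr. Qed.

Lemma shifts_sum m (I : Type) (r : seq I) (P : pred I) (F : I -> R) :
  (forall i, P i -> shifts m (F i)) -> shifts m (\sum_(i <- r | P i) F i).
Proof.
move=> hF; apply: big_ind => //; last exact: shiftsD.
by rewrite /shifts mul0r mulr0.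
Qed.

Lemma shiftsM m1 m2 a b : shifts m1 a -> shifts m2 b -> shifts (m1 + m2) (a * b).
Proof.
rewrite /shifts => ha hb.
by rewrite -mulrA hb mulrA mulrDr ha commr_int -mulrDl -addrA -intrD mulrA.
Qed.

Lemma shifts_mull m c a : GRing.comm c h -> shifts m a -> shifts m (c * a).
Proof. by move=> /shifts_comm hc /(shiftsM hc); rewrite add0r. Qed.

Lemma shifts_lidealizer m a : shifts m a -> h \in lidealizer a.
Proof. by move=> ha; apply/lidealizerP; exists (h + m%:~R). Qed.

Lemma shifts_ridealizer m a : shifts m a -> h \in ridealizer a.
Proof.
move=> ha; apply/ridealizerP; exists (h - m%:~R).
by rewrite mulrBr ha commr_int mulrDl addrK.
Qed.

Lemma shifts_inv m a (k : int) u v :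
  shifts m a -> v * (h + (k + m)%:~R) = 1 -> (h + k%:~R) * u = 1 ->
  a * u = v * a.
Proof.
move=> ha vK uK.
have E : (h + (k + m)%:~R) * a = a * (h + k%:~R).
  by rewrite [RHS]mulrDr ha commr_int -mulrDl -addrA -intrD (addrC m).
by rewrite -[v * a]mulr1 -uK !mulrA -(mulrA v) -E mulrA vK mul1r.
Qed.

End Shifts.

Section RingIdentities.
Variable R : pzRingType.

Lemma mulr_symprod (a p q c : R) :
  GRing.comm a p -> GRing.comm c p -> a * q = q * a + c ->
  a * (p * q + q * p) = (p * q + q * p) * a + c * p *+ 2.
Proof.
move=> cap ccp aq.
have apq : a * (p * q) = p * q * a + c * p.
  by rewrite mulrA cap -mulrA aq mulrDr mulrA ccp.
have aqp : a * (q * p) = q * p * a + c * p.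
  by rewrite mulrA aq mulrDl -mulrA cap mulrA.
by rewrite mulrDr apq aqp mulrDl addrACA mulr2n.
Qed.

Lemma sum_delta m (F : 'I_m -> R) i : \sum_k (i == k)%:R * F k = F i.
Proof.
rewrite (bigD1 i) //= eqxx mul1r big1 ?addr0 // => k.
by rewrite eq_sym => /negbTE ->; rewrite mul0r.
Qed.

End RingIdentities.

Section Localization.
Variables (n : nat) (eta : 'M[algC]_n).
Local Notation term := (term n).
Local Notation teq := (teq eta).

Definition Aloc := {S : term -> Prop | exists t, S = teq t}.
Definition pi (t : term) : Aloc := exist _ (teq t) (ex_intro _ t erefl).
Definition rep (q : Aloc) : term := projT1 (cid (proj2_sig q)).

Lemma repK : cancel rep pi.
Proof.
rewrite /rep => -[S hS] /=; case: (cid _) => t /= ht; subst S.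
by congr exist; exact: Prop_irrelevance.
Qed.

Lemma piW (P : Aloc -> Prop) : (forall t, P (pi t)) -> forall q, P q.
Proof. by move=> hP q; rewrite -[q]repK. Qed.

Lemma pi_eq a b : pi a = pi b <-> teq a b.
Proof.
split=> [/(congr1 sval) /= E | ab].
  by rewrite E; exact: teq_refl.
apply/eq_exist/funext => t; apply/propext.
by split; [apply: teq_trans; exact: teq_sym | exact: teq_trans].
Qed.

Lemma teq_rep a : teq (rep (pi a)) a.
Proof. by apply/pi_eq; rewrite repK. Qed.

HB.instance Definition _ := gen_eqMixin Aloc.
HB.instance Definition _ := gen_choiceMixin Aloc.

Definition add_loc p q := pi (tadd (rep p) (rep q)).
Definition mul_loc p q := pi (tmul (rep p) (rep q)).
Definition opp_loc q := pi (tscale (-1) (rep q)).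

Lemma pi_add a b : pi (tadd a b) = add_loc (pi a) (pi b).
Proof. by apply/pi_eq; apply: teq_add; apply: teq_sym; apply: teq_rep. Qed.
Lemma pi_mul a b : pi (tmul a b) = mul_loc (pi a) (pi b).
Proof. by apply/pi_eq; apply: teq_mul; apply: teq_sym; apply: teq_rep. Qed.
Lemma pi_opp a : pi (tscale (-1) a) = opp_loc (pi a).
Proof. by apply/pi_eq; apply: teq_mul; [exact: teq_refl | apply/teq_sym/teq_rep]. Qed.

Lemma add_locA : associative add_loc.
Proof.
elim/piW=> a; elim/piW=> b; elim/piW=> c; rewrite -!pi_add.
by apply/pi_eq; exact: teq_addA.
Qed.
Lemma add_locC : commutative add_loc.
Proof.
by elim/piW=> a; elim/piW=> b; rewrite -!pi_add; apply/pi_eq; exact: teq_addC.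
Qed.
Lemma add0_loc : left_id (pi (tS n 0)) add_loc.
Proof. by elim/piW=> a; rewrite -pi_add; apply/pi_eq; exact: teq_add0. Qed.
Lemma addN_loc : left_inverse (pi (tS n 0)) opp_loc add_loc.
Proof.
elim/piW=> a; rewrite -pi_opp -pi_add; apply/pi_eq.
exact: teq_trans (teq_addC _ _ _) (teq_addN _ _).
Qed.

HB.instance Definition _ :=
  GRing.isZmodule.Build Aloc add_locA add_locC add0_loc addN_loc.

Lemma mul_locA : associative mul_loc.
Proof.
elim/piW=> a; elim/piW=> b; elim/piW=> c; rewrite -!pi_mul.
by apply/pi_eq; exact: teq_mulA.
Qed.
Lemma mul1_loc : left_id (pi (tS n 1)) mul_loc.
Proof. by elim/piW=> a; rewrite -pi_mul; apply/pi_eq; exact: teq_mul1l. Qed.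
Lemma mul_loc1 : right_id (pi (tS n 1)) mul_loc.
Proof. by elim/piW=> a; rewrite -pi_mul; apply/pi_eq; exact: teq_mul1r. Qed.
Lemma mul_locDl : left_distributive mul_loc add_loc.
Proof.
elim/piW=> a; elim/piW=> b; elim/piW=> c.
rewrite -pi_add -!pi_mul -pi_add; apply/pi_eq; exact: teq_mulDl.
Qed.
Lemma mul_locDr : right_distributive mul_loc add_loc.
Proof.
elim/piW=> a; elim/piW=> b; elim/piW=> c.
rewrite -pi_add -!pi_mul -pi_add; apply/pi_eq; exact: teq_mulDr.
Qed.

HB.instance Definition _ := GRing.Zmodule_isPzRing.Build Aloc
  mul_locA mul1_loc mul_loc1 mul_locDl mul_locDr.

Lemma piD a b : pi (tadd a b) = pi a + pi b. Proof. exact: pi_add. Qed.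
Lemma piM a b : pi (tmul a b) = pi a * pi b. Proof. exact: pi_mul. Qed.

Definition scal (c : algC) : Aloc := pi (tS n c).

Lemma scalD c d : scal (c + d) = scal c + scal d.
Proof. by rewrite -piD; apply/pi_eq; exact: teq_SD. Qed.
Lemma scalM c d : scal (c * d) = scal c * scal d.
Proof. by rewrite -piM; apply/pi_eq; exact: teq_SM. Qed.
Lemma scalB c d : scal (c - d) = scal c - scal d.
Proof.
by apply/eqP; rewrite -subr_eq0 opprB addrA -scalD subrK subrr.
Qed.

HB.instance Definition _ := GRing.isZmodMorphism.Build algC Aloc scal scalB.
HB.instance Definition _ := GRing.isMonoidMorphism.Build algC Aloc scal
  (erefl, scalM).

Lemma scal_comm c q : GRing.comm (scal c) q.
Proof.
by elim/piW: q => a; rewrite /GRing.comm -!piM; apply/pi_eq; exact: teq_Scentral.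
Qed.

Lemma piS c : pi (tS n c) = scal c. Proof. by []. Qed.
Lemma piZ c a : pi (tscale c a) = scal c * pi a. Proof. exact: piM. Qed.
Lemma piB a b : pi (tsub a b) = pi a - pi b.
Proof. by rewrite piD piZ rmorphN1 mulN1r. Qed.
Lemma piX a k : pi (tpow a k) = pi a ^+ k.
Proof. by elim: k => // k IH; rewrite [tpow a _]iterS piM -/(tpow a k) IH exprS. Qed.
Lemma pi_foldr_add (I : Type) (f : I -> term) (s : seq I) :
  pi (foldr (fun i acc => tadd (f i) acc) (tS n 0) s) = \sum_(i <- s) pi (f i).
Proof. by elim: s => [|i s IH]; rewrite ?big_nil ?big_cons //= piD IH. Qed.
Lemma pi_foldr_mul (I : Type) (f : I -> term) (s : seq I) :
  pi (foldr (fun i acc => tmul (f i) acc) (tS n 1) s) = \prod_(i <- s) pi (f i).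
Proof. by elim: s => [|i s IH]; rewrite ?big_nil ?big_cons //= piM IH. Qed.
Lemma pi_tsum (f : 'I_n -> term) : pi (tsum f) = \sum_i pi (f i).
Proof. by rewrite pi_foldr_add big_enum. Qed.
Lemma pi_tsumn N (f : nat -> term) : pi (tsumn N f) = \sum_(0 <= k < N) pi (f k).
Proof. by rewrite pi_foldr_add /index_iota subn0. Qed.

End Localization.

(* Locked: unfolded, ['i / sqrtC 2] is itself a product, which [rmorphM] would
   split under [scal]. *)
Fact cXY_key : unit. Proof. exact: tt. Qed.
Definition cXY : algC := locked_with cXY_key ('i / sqrtC 2).

Lemma cXYE : cXY = 'i / sqrtC 2. Proof. exact: locked_withE. Qed.

Lemma cXY_sqr : cXY * cXY = -1 / 2.
Proof. by rewrite cXYE -expr2 expr_div_n sqrCi sqrtCK. Qed.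

Lemma cXY2_sqr : (2 * cXY) * (2 * cXY) = -2.
Proof. rewrite mulrACA cXY_sqr; field; by rewrite ?pnatr_eq0. Qed.
Lemma cXY_cXY2 : cXY * (2 * cXY) = -1.
Proof. rewrite mulrCA cXY_sqr; field; by rewrite ?pnatr_eq0. Qed.
Lemma cXY2_cXY : (2 * cXY) * cXY = -1.
Proof. by rewrite mulrC cXY_cXY2. Qed.

Section WeylCliffordComputations.
Variables (n : nat) (eta : 'M[algC]_n).
Local Notation pi := (pi eta).
Local Notation scal := (scal eta).
Local Notation xA i := (pi (tx i)).
Local Notation dA i := (pi (td i)).
Local Notation gA i := (pi (tg i)).
Local Notation uA k := (pi (tu n k)).
Local Notation xlA i := (pi (xlow eta i)).
Local Notation glA i := (pi (glow eta i)).
Local Notation duA i := (pi (dup eta i)).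
Local Notation HA := (pi (Hterm n)).
Local Notation XA := (pi (Xterm n)).
Local Notation YA := (pi (Yterm eta)).
Local Notation EA := (pi (Eterm eta)).
Local Notation FA := (pi (Fterm eta)).
Local Notation SA := (\sum_i (dA i * xA i + xA i * dA i)).
Hypothesis eta_sym : eta^T = eta.
Hypothesis eta_unit : eta \in unitmx.

Lemma comm_xx i j : GRing.comm (xA i) (xA j).
Proof. by rewrite /GRing.comm -!piM; apply/pi_eq; exact: teq_xx. Qed.
Lemma comm_dd i j : GRing.comm (dA i) (dA j).
Proof. by rewrite /GRing.comm -!piM; apply/pi_eq; exact: teq_dd. Qed.
Lemma comm_gx i j : GRing.comm (gA i) (xA j).
Proof. by rewrite /GRing.comm -!piM; apply/pi_eq; exact: teq_gx. Qed.
Lemma comm_gd i j : GRing.comm (gA i) (dA j).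
Proof. by rewrite /GRing.comm -!piM; apply/pi_eq; exact: teq_gd. Qed.

Lemma mul_dx i j : dA i * xA j = xA j * dA i + (i == j)%:R.
Proof.
have /pi_eq := teq_dx eta i j; rewrite piB !piM piS rmorph_nat => <-.
by rewrite addrC subrK.
Qed.
Lemma mul_xd i j : xA i * dA j = dA j * xA i - (j == i)%:R.
Proof. by rewrite mul_dx addrK. Qed.

Lemma mul_gg i j : gA i * gA j = scal (2 * eta i j) - gA j * gA i.
Proof. by have /pi_eq := teq_gg eta i j; rewrite piD !piM piS => <-; rewrite addrK. Qed.

Lemma mul_uH k : uA k * (HA + k%:~R) = 1.
Proof. by have /pi_eq := teq_ul eta k; rewrite piM piD piS rmorph_int. Qed.
Lemma mul_Hu k : (HA + k%:~R) * uA k = 1.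
Proof. by have /pi_eq := teq_ur eta k; rewrite piM piD piS rmorph_int. Qed.

Lemma pi_xlow i : xlA i = \sum_j scal (etainv eta i j) * xA j.
Proof. by rewrite pi_tsum; apply: eq_bigr => j _; rewrite piZ. Qed.
Lemma pi_glow i : glA i = \sum_j scal (etainv eta i j) * gA j.
Proof. by rewrite pi_tsum; apply: eq_bigr => j _; rewrite piZ. Qed.
Lemma pi_dup i : duA i = \sum_j scal (eta i j) * dA j.
Proof. by rewrite pi_tsum; apply: eq_bigr => j _; rewrite piZ. Qed.
Lemma pi_H : HA = scal (-1 / 2) * SA.
Proof.
by rewrite piZ pi_tsum; congr (_ * _); apply: eq_bigr => i _; rewrite piD !piM.
Qed.
Lemma pi_X : XA = scal cXY * \sum_i gA i * dA i.
Proof.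
by rewrite cXYE piZ pi_tsum; congr (_ * _); apply: eq_bigr => i _; rewrite piM.
Qed.
Lemma pi_Y : YA = scal cXY * \sum_i gA i * xlA i.
Proof.
by rewrite cXYE piZ pi_tsum; congr (_ * _); apply: eq_bigr => i _; rewrite piM.
Qed.

Lemma mulr_scal a c b : a * (scal c * b) = scal c * (a * b).
Proof. by rewrite mulrA -scal_comm mulrA. Qed.

Lemma comm_dX j : GRing.comm (dA j) XA.
Proof.
rewrite pi_X; apply: commrM; first exact: commr_sym (scal_comm _ _).
apply: commr_sum => i _.
by apply: commrM; [exact: commr_sym (comm_gd _ _) | exact: comm_dd].
Qed.

Lemma comm_dupX j : GRing.comm (duA j) XA.
Proof.
rewrite pi_dup; apply/commr_sym/commr_sum => k _.
by apply: commrM; [exact: commr_sym (scal_comm _ _) | exact: commr_sym (comm_dX _)].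
Qed.

Lemma comm_gxlow i k : GRing.comm (gA i) (xlA k).
Proof.
rewrite pi_xlow; apply/commr_sum => m _.
by apply: commrM; [exact: commr_sym (scal_comm _ _) | exact: comm_gx].
Qed.

Lemma comm_xY j : GRing.comm (xA j) YA.
Proof.
rewrite pi_Y; apply: commrM; first exact: commr_sym (scal_comm _ _).
apply: commr_sum => i _; apply: commrM; first exact: commr_sym (comm_gx _ _).
rewrite pi_xlow; apply/commr_sum => k _.
by apply: commrM; [exact: commr_sym (scal_comm _ _) | exact: comm_xx].
Qed.

Lemma mul_Xx j : XA * xA j = xA j * XA + scal cXY * gA j.
Proof.
rewrite pi_X -mulrA mulr_suml.
under eq_bigr => k _ do rewrite -mulrA mul_dx mulrDr.
rewrite big_split mulrDr /= mulr_scal; congr (_ + _); congr (_ * _).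
  by rewrite mulr_sumr; apply: eq_bigr => k _; rewrite !mulrA comm_gx.
rewrite -[RHS](sum_delta (fun k => gA k) j); apply: eq_bigr => k _.
by rewrite commr_nat eq_sym.
Qed.

Lemma mul_dxlow i k : dA i * xlA k = xlA k * dA i + scal (etainv eta k i).
Proof.
rewrite pi_xlow mulr_sumr mulr_suml.
under eq_bigr => m _ do rewrite mulr_scal mul_dx mulrDr.
rewrite big_split /=; congr (_ + _); first by apply: eq_bigr => m _; rewrite mulrA.
rewrite -[RHS](sum_delta (fun m => scal (etainv eta k m)) i).
by apply: eq_bigr => m _; rewrite -scal_comm.
Qed.

Lemma etaC i j : eta i j = eta j i.
Proof. by rewrite -{1}eta_sym mxE. Qed.
Lemma etainvC i j : etainv eta i j = etainv eta j i.
Proof. by rewrite /etainv -{1}eta_sym -trmx_inv mxE. Qed.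
Lemma eta_etainv i m : \sum_k eta i k * etainv eta k m = (i == m)%:R.
Proof.
have /(congr1 (fun M : 'M_n => M i m)) := mulmxV eta_unit.
by rewrite !mxE => <-; apply: eq_bigr.
Qed.

Lemma sum_eta_xlow i : \sum_k scal (eta i k) * xlA k = xA i.
Proof.
under eq_bigr => k _ do rewrite pi_xlow mulr_sumr.
rewrite exchange_big /= -[RHS](sum_delta (fun m => xA m) i); apply: eq_bigr => m _.
rewrite -(rmorph_nat scal) -eta_etainv rmorph_sum mulr_suml; apply: eq_bigr => k _.
by rewrite mulrA -rmorphM.
Qed.

Lemma mul_Xg j : XA * gA j = scal (2 * cXY) * duA j - gA j * XA.
Proof.
rewrite pi_X -mulrA mulr_suml.
under eq_bigr => k _ do rewrite -mulrA -(comm_gd j k) mulrA mul_gg mulrBl.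
rewrite sumrB mulrBr; congr (_ - _).
  rewrite pi_dup !mulr_sumr; apply: eq_bigr => k _.
  by rewrite !mulrA -!rmorphM etaC mulrCA mulrA.
rewrite mulr_scal mulr_sumr; congr (_ * _).
by apply: eq_bigr => k _; rewrite mulrA.
Qed.

Lemma mul_gY i : gA i * YA = scal (2 * cXY) * xA i - YA * gA i.
Proof.
rewrite pi_Y mulr_scal mulr_sumr.
under eq_bigr => k _ do rewrite mulrA mul_gg mulrBl -mulrA (comm_gxlow i k) mulrA.
rewrite sumrB mulrBr; congr (_ - _).
  rewrite -sum_eta_xlow !mulr_sumr; apply: eq_bigr => k _.
  by rewrite !mulrA -!rmorphM mulrCA mulrA.
by rewrite -mulrA mulr_suml.
Qed.

Lemma mul_dY i : dA i * YA = YA * dA i + scal cXY * glA i.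
Proof.
have -> : YA * dA i + scal cXY * glA i = scal cXY *
    (\sum_k gA k * xlA k * dA i + \sum_k scal (etainv eta i k) * gA k).
  by rewrite pi_Y pi_glow -mulrA mulr_suml mulrDr.
rewrite pi_Y mulr_scal mulr_sumr -big_split; congr (_ * _); apply: eq_bigr => k _.
rewrite mulrA -(comm_gd k i) -mulrA mul_dxlow mulrDr mulrA etainvC.
by rewrite (scal_comm _ (gA k)).
Qed.

Lemma mul_glowY i : glA i * YA = scal (2 * cXY) * xlA i - YA * glA i.
Proof.
rewrite pi_glow pi_xlow mulr_suml !mulr_sumr -sumrB; apply: eq_bigr => j _.
rewrite -mulrA mul_gY mulrBr; congr (_ - _).
  by rewrite !mulrA -!rmorphM [etainv _ _ _ * _]mulrC.
by rewrite !mulrA scal_comm.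
Qed.

Lemma mul_dS i : dA i * SA = SA * dA i + dA i *+ 2.
Proof.
rewrite mulr_sumr mulr_suml.
under eq_bigr => k _ do
  rewrite (mulr_symprod (comm_dd i k) (commr_sym (commr_nat _ _)) (mul_dx i k)).
by rewrite big_split /= sumrMnl sum_delta.
Qed.

Lemma mul_xS i : xA i * SA = SA * xA i - xA i *+ 2.
Proof.
rewrite mulr_sumr mulr_suml.
under eq_bigr => k _ do rewrite [dA k * _ + _]addrC (mulr_symprod (comm_xx i k)
  (commr_sym (commrN (commr_nat _ _))) (mul_xd i k)) [xA k * _ + _]addrC mulNr eq_sym.
by rewrite big_split /= sumrMnl sumrN sum_delta mulNrn.
Qed.

Lemma scal_half_twice a : scal (-1 / 2) * (a *+ 2) = - a.
Proof.
have half2 : (-1 / 2 : algC) *+ 2 = -1.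
  by rewrite -mulrnAr -[2^-1 *+ 2]mulr_natr mulVf ?mulr1 ?pnatr_eq0.
by rewrite mulrnAr -mulrnAl -rmorphMn half2 rmorphN1 mulN1r.
Qed.

Lemma shifts_d i : shifts HA (-1) (dA i).
Proof.
rewrite /shifts pi_H mulr_scal mul_dS mulrDr scal_half_twice mulrDl mulrA.
by rewrite mulrN1z (mulN1r (dA i)).
Qed.

Lemma shifts_x i : shifts HA 1 (xA i).
Proof.
rewrite /shifts pi_H mulr_scal mul_xS mulrBr scal_half_twice mulrDl mulrA.
by rewrite opprK mulr1z mul1r.
Qed.

Lemma comm_gH i : GRing.comm (gA i) HA.
Proof.
rewrite pi_H; apply: commrM; first exact: commr_sym (scal_comm _ _).
apply: commr_sum => k _; apply: commrD; apply: commrM;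
  by [exact: comm_gd | exact: comm_gx].
Qed.

Lemma shifts_xlow i : shifts HA 1 (xlA i).
Proof.
rewrite pi_xlow; apply: shifts_sum => j _.
by apply: shifts_mull; [exact: scal_comm | exact: shifts_x].
Qed.

Lemma shifts_X : shifts HA (-1) XA.
Proof.
rewrite pi_X; apply: shifts_mull; first exact: scal_comm.
apply: shifts_sum => i _.
by apply: shifts_mull; [exact: comm_gH | exact: shifts_d].
Qed.

Lemma shifts_Y : shifts HA 1 YA.
Proof.
rewrite pi_Y; apply: shifts_mull; first exact: scal_comm.
apply: shifts_sum => i _.
by apply: shifts_mull; [exact: comm_gH | exact: shifts_xlow].
Qed.

Lemma mul_du i k : dA i * uA k = uA (k - 1) * dA i.
Proof. exact: shifts_inv (shifts_d i) (mul_uH _) (mul_Hu _). Qed.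
Lemma mul_Xu k : XA * uA k = uA (k - 1) * XA.
Proof. exact: shifts_inv shifts_X (mul_uH _) (mul_Hu _). Qed.
Lemma mul_Yu k : YA * uA k = uA (k + 1) * YA.
Proof. exact: shifts_inv shifts_Y (mul_uH _) (mul_Hu _). Qed.
Lemma comm_gu i k : GRing.comm (gA i) (uA k).
Proof.
have := shifts_inv (shifts_comm (comm_gH i)) (mul_uH (k + 0)) (mul_Hu k).
by rewrite addr0.
Qed.

Lemma scal_lidealizer c e : scal c \in lidealizer e.
Proof. exact/lidealizer_comm/commr_sym/scal_comm. Qed.
Lemma scal_ridealizer c e : scal c \in ridealizer e.
Proof. exact/ridealizer_comm/commr_sym/scal_comm. Qed.

Lemma H_lidealizer_X : HA \in lidealizer XA.
Proof. exact: shifts_lidealizer shifts_X. Qed.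
Lemma H_ridealizer_Y : HA \in ridealizer YA.
Proof. exact: shifts_ridealizer shifts_Y. Qed.
Lemma u_lidealizer_X k : uA k \in lidealizer XA.
Proof. by apply/lidealizerP; exists (uA (k - 1)); exact: mul_Xu. Qed.
Lemma u_ridealizer_Y k : uA k \in ridealizer YA.
Proof. by apply/ridealizerP; exists (uA (k - 1)); rewrite mul_Yu subrK. Qed.

Lemma pi_kinv j m : pi (kinv n j m) =
  if odd j then uA (m + (j.+1./2)%:Z) else scal (- (j./2)%:R)^-1.
Proof. by rewrite /kinv; case: odd. Qed.

Lemma pi_phiH m k : pi (phiH n m k) =
  \prod_(j <- iota 1 k) (scal ((-1) ^+ j) * pi (kinv n j m)).
Proof. by rewrite pi_foldr_mul; apply: eq_bigr => j _; rewrite piM. Qed.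

Lemma phiH_ridealizer_Y m k : pi (phiH n m k) \in ridealizer YA.
Proof.
rewrite pi_phiH; apply: rpred_prod => j _; apply: rpredM; first exact: scal_ridealizer.
by rewrite pi_kinv; case: odd; [exact: u_ridealizer_Y | exact: scal_ridealizer].
Qed.

Lemma comm_g_phiH i m k : GRing.comm (gA i) (pi (phiH n m k)).
Proof.
rewrite pi_phiH; apply: commr_prod => j _.
apply: commrM; first exact: commr_sym (scal_comm _ _).
by rewrite pi_kinv; case: odd; [exact: comm_gu | exact: commr_sym (scal_comm _ _)].
Qed.

Lemma mul_d_phiH i m k : dA i * pi (phiH n m k) = pi (phiH n (m - 1) k) * dA i.
Proof.
rewrite !pi_phiH; elim: (iota 1 k) => [|j s IH]; first by rewrite !big_nil mulr1 mul1r.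
have dj : dA i * (scal ((-1) ^+ j) * pi (kinv n j m)) =
    scal ((-1) ^+ j) * pi (kinv n j (m - 1)) * dA i.
  rewrite mulr_scal -mulrA !pi_kinv; case: odd; first by rewrite mul_du addrAC.
  by rewrite (scal_comm _ (dA i)).
by rewrite !big_cons mulrA dj -!mulrA IH.
Qed.

Lemma pi_ratH p s : pi (ratH n p s) =
  (\sum_(0 <= i < size p) scal p`_i * HA ^+ i) * \prod_(k <- s) uA k.
Proof.
rewrite piM pi_foldr_mul pi_tsumn; congr (_ * _).
by apply: eq_bigr => i _; rewrite piZ piX.
Qed.

Lemma ratH_lidealizer_X p s : pi (ratH n p s) \in lidealizer XA.
Proof.
rewrite pi_ratH; apply: rpredM.
  apply: rpred_sum => i _; apply: rpredM; first exact: scal_lidealizer.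
  exact/rpredX/H_lidealizer_X.
by apply: rpred_prod => k _; exact: u_lidealizer_X.
Qed.

Lemma ratH_ridealizer_Y p s : pi (ratH n p s) \in ridealizer YA.
Proof.
rewrite pi_ratH; apply: rpredM.
  apply: rpred_sum => i _; apply: rpredM; first exact: scal_ridealizer.
  exact/rpredX/H_ridealizer_Y.
by apply: rpred_prod => k _; exact: u_ridealizer_Y.
Qed.

Definition II : {pred Aloc eta} := fun z =>
  `[< exists p q r s, z = YA * p + FA * q + (r * XA + s * EA) >].

Lemma IIP z :
  reflect (exists p q r s, z = YA * p + FA * q + (r * XA + s * EA)) (z \in II).
Proof. exact: asboolP. Qed.

Lemma II_zmod_closed : zmod_closed II.
Proof.
split; first by apply/IIP; exists 0, 0, 0, 0; rewrite !mulr0 !mul0r !addr0.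
move=> _ _ /IIP[p [q [r [s ->]]]] /IIP[p' [q' [r' [s' ->]]]]; apply/IIP.
exists (p - p'), (q - q'), (r - r'), (s - s').
rewrite !mulrBr !mulrBl [in LHS]opprD addrACA.
by congr (_ + _); rewrite opprD addrACA.
Qed.

HB.instance Definition _ := GRing.isZmodClosed.Build (Aloc eta) II II_zmod_closed.

Lemma II_Yl p : YA * p \in II.
Proof. by apply/IIP; exists p, 0, 0, 0; rewrite !mulr0 !mul0r !addr0. Qed.
Lemma II_Xr r : r * XA \in II.
Proof. by apply/IIP; exists 0, 0, r, 0; rewrite !mulr0 !mul0r !addr0 add0r. Qed.
Lemma II_scal c z : z \in II -> scal c * z \in II.
Proof.
move=> /IIP[p [q [r [s ->]]]]; apply/IIP.
exists (scal c * p), (scal c * q), (scal c * r), (scal c * s).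
by rewrite !mulrDr !mulrA -!(scal_comm c).
Qed.

Lemma inII_pi t : pi t \in II -> inII eta t.
Proof.
move=> /IIP[p [q [r [s E]]]]; exists (rep p), (rep q), (rep r), (rep s).
by apply/pi_eq; rewrite E !piD !piM !repK.
Qed.

Definition eqII a b : Prop := a - b \in II.

#[local] Instance eqII_Equivalence : Equivalence eqII.
Proof.
split=> [a | a b | a b c]; rewrite /eqII; first by rewrite subrr rpred0.
  by rewrite -opprB rpredN.
by move=> ab bc; rewrite -[a](subrK b) -addrA rpredD.
Qed.
#[local] Instance add_eqII : Proper (eqII ==> eqII ==> eqII) +%R.
Proof. by move=> a a' aa' b b' bb'; rewrite /eqII opprD addrACA rpredD. Qed.
#[local] Instance opp_eqII : Proper (eqII ==> eqII) -%R.
Proof. by move=> a a' aa'; rewrite /eqII -opprD rpredN. Qed.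
#[local] Instance scal_mul_eqII c : Proper (eqII ==> eqII) ( *%R (scal c)).
Proof. by move=> a a' aa'; rewrite /eqII -mulrBr II_scal. Qed.

Lemma eqII_Yl p : eqII (YA * p) 0.
Proof. by rewrite /eqII subr0 II_Yl. Qed.
Lemma eqII_Xr r : eqII (r * XA) 0.
Proof. by rewrite /eqII subr0 II_Xr. Qed.

Local Notation summand a b k :=
  (pi a * pi (phiH n 0 k) * YA ^+ k * XA ^+ k * pi b).

Lemma diamond_is_truncated N a b c :
  (forall k, (N <= k)%N -> summand a b k \in II) ->
  eqII (\sum_(0 <= k < N) summand a b k) (pi c) ->
  diamond_is eta a b c.
Proof.
move=> tail head; exists N; split=> [k /tail|].
  by rewrite -!piX -!piM; exact: inII_pi.
apply: inII_pi; rewrite piB pi_tsumn.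
by under eq_bigr => k _ do rewrite /dterm !piM !piX.
Qed.

Lemma summand_II_X {a} b B m k :
  XA ^+ m * pi b = B * XA -> (m <= k)%N -> summand a b k \in II.
Proof. by move=> XB le_mk; rewrite (mulr_expr_lideal _ XB le_mk) II_Xr. Qed.

Lemma summand_II_Y a {b} L m k :
  pi a * pi (phiH n 0 k) * YA ^+ m = YA * L -> (m <= k)%N -> summand a b k \in II.
Proof.
move=> LY le_mk.
by rewrite -(mulrA _ (XA ^+ k)) (mulr_expr_rideal _ LY le_mk) II_Yl.
Qed.

Lemma phiH0 m : pi (phiH n m 0) = 1.
Proof. by rewrite pi_phiH big_nil. Qed.

Lemma scal_mulA c d a : scal c * (scal d * a) = scal (c * d) * a.
Proof. by rewrite mulrA -rmorphM. Qed.

Lemma summand_dg1 i j P P' : dA i * P = P' * dA i -> P' \in ridealizer YA ->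
  eqII (dA i * P * YA * XA * gA j) (- (P' * glA i * duA j)).
Proof.
move=> dP /ridealizerP[P'' P'Y].
rewrite -mulrA mul_Xg mulrBr [_ * (gA j * XA)]mulrA eqII_Xr subr0.
rewrite dP -(mulrA P') mul_dY mulrDr mulrDl [P' * (YA * dA i)]mulrA P'Y.
rewrite -!mulrA eqII_Yl add0r.
rewrite -?mulrA; repeat (rewrite scal_mulA || rewrite mulr_scal).
by rewrite cXY_cXY2 rmorphN1 mulN1r; reflexivity.
Qed.

Lemma summand_gg1 i j P : GRing.comm (gA i) P -> P \in ridealizer YA ->
  eqII (gA i * P * YA * XA * gA j) (scal (-2) * (P * xA i * duA j)).
Proof.
move=> gP /ridealizerP[P' PY].
rewrite -mulrA mul_Xg mulrBr [_ * (gA j * XA)]mulrA eqII_Xr subr0.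
rewrite gP -(mulrA P) mul_gY mulrBr mulrBl [P * (YA * gA i)]mulrA PY.
rewrite -!mulrA eqII_Yl subr0.
rewrite -?mulrA; repeat (rewrite scal_mulA || rewrite mulr_scal).
by rewrite cXY2_sqr; reflexivity.
Qed.

Lemma summand_dx1 i j P P' : dA i * P = P' * dA i -> P' \in ridealizer YA ->
  eqII (dA i * P * YA * XA * xA j) (scal (-1 / 2) * (P' * glA i * gA j)).
Proof.
move=> dP /ridealizerP[P'' P'Y].
rewrite -mulrA mul_Xx mulrDr [_ * (xA j * XA)]mulrA eqII_Xr add0r.
rewrite dP -(mulrA P') mul_dY mulrDr mulrDl [P' * (YA * dA i)]mulrA P'Y.
rewrite -!mulrA eqII_Yl add0r.
rewrite -?mulrA; repeat (rewrite scal_mulA || rewrite mulr_scal).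
by rewrite cXY_sqr; reflexivity.
Qed.

Lemma mul_dY2 i : dA i * YA ^+ 2 = YA * (dA i * YA - scal cXY * glA i) - xlA i.
Proof.
rewrite expr2 mulrA {1}mul_dY mulrDl -(mulrA (scal cXY)) mul_glowY mulrBr scal_mulA.
rewrite cXY_cXY2 rmorphN1 mulN1r mulrBr mulr_scal [YA * (dA i * YA)]mulrA.
by rewrite addrA addrAC.
Qed.

Lemma mul_X2x j : XA ^+ 2 * xA j = xA j * XA * XA - duA j.
Proof.
rewrite expr2 -mulrA mul_Xx mulrDr mulrA mul_Xx mulr_scal mul_Xg mulrBr mulrDl.
rewrite -addrA; congr (_ + _).
rewrite -(mulrA (scal cXY)) !scal_mulA cXY_cXY2 rmorphN1 mulN1r.
by rewrite addrCA subrr addr0.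
Qed.

Lemma summand_dx2 i j P P' : dA i * P = P' * dA i -> P' \in ridealizer YA ->
  eqII (dA i * P * YA ^+ 2 * XA ^+ 2 * xA j) (P' * xlA i * duA j).
Proof.
move=> dP /ridealizerP[P'' P'Y].
rewrite -mulrA mul_X2x mulrBr [_ * (xA j * XA * XA)]mulrA eqII_Xr sub0r.
rewrite dP -(mulrA P') mul_dY2 mulrBr mulrBl [P' * (YA * _)]mulrA P'Y.
by rewrite -!mulrA eqII_Yl sub0r opprK; reflexivity.
Qed.

Lemma summand_gx1 i j P : GRing.comm (gA i) P -> P \in ridealizer YA ->
  eqII (gA i * P * YA * XA * xA j) (- (P * xA i * gA j)).
Proof.
move=> gP /ridealizerP[P' PY].
rewrite -mulrA mul_Xx mulrDr [_ * (xA j * XA)]mulrA eqII_Xr add0r.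
rewrite gP -(mulrA P) mul_gY mulrBr mulrBl [P * (YA * gA i)]mulrA PY.
rewrite -!mulrA eqII_Yl subr0.
rewrite -?mulrA; repeat (rewrite scal_mulA || rewrite mulr_scal).
by rewrite cXY2_cXY rmorphN1 mulN1r; reflexivity.
Qed.

Lemma X2g_lideal j : XA ^+ 2 * gA j = (scal (2 * cXY) * duA j - XA * gA j) * XA.
Proof.
rewrite expr2 -mulrA {1}mul_Xg mulrBr mulrBl mulr_scal.
by rewrite -(mulrA (scal _) (duA j)) comm_dupX !mulrA.
Qed.

Lemma X3x_lideal j : XA ^+ 3 * xA j = (XA * xA j * XA - duA j) * XA.
Proof. by rewrite exprS -mulrA mul_X2x mulrBr mulrBl !mulrA comm_dupX. Qed.

Lemma gY2_rideal i P : GRing.comm (gA i) P -> P \in ridealizer YA ->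
  exists L, gA i * P * YA ^+ 2 = YA * L.
Proof.
move=> gP /ridealizerP[P' PY]; exists (P' * (scal (2 * cXY) * xA i - gA i * YA)).
rewrite gP -mulrA [RHS]mulrA -PY -mulrA; congr (P * _).
rewrite expr2 mulrA {1}mul_gY mulrBl mulrBr -(mulrA (scal _)) comm_xY mulr_scal.
by rewrite !mulrA.
Qed.

Lemma summand0 a b : summand a b 0 = pi a * pi b.
Proof. by rewrite phiH0 !expr0 !mulr1. Qed.

Lemma summand_II_lidealizer {a} b k :
  (0 < k)%N -> pi b \in lidealizer XA -> summand a b k \in II.
Proof.
move=> k_gt0 /lidealizerP[B XB].
by apply: (summand_II_X (B := B) _ k_gt0); rewrite expr1.
Qed.

Lemma summand_II_ridealizer a {b} k : (0 < k)%N ->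
  pi a * pi (phiH n 0 k) \in ridealizer YA -> summand a b k \in II.
Proof.
move=> k_gt0 /ridealizerP[L LY].
by apply: (summand_II_Y (L := L) _ k_gt0); rewrite expr1.
Qed.

Lemma diamond_d a j : diamond_is eta a (td j) (tmul a (td j)).
Proof.
apply: (@diamond_is_truncated 1) => [k k_gt0|].
  exact/summand_II_lidealizer/lidealizer_comm/commr_sym/comm_dX.
by rewrite big_nat1 summand0 piM; reflexivity.
Qed.

Lemma diamond_x a i : diamond_is eta (tx i) a (tmul (tx i) a).
Proof.
apply: (@diamond_is_truncated 1) => [k k_gt0|].
  apply: summand_II_ridealizer k_gt0 _.
  rewrite rpredM ?phiH_ridealizer_Y //; exact/ridealizer_comm/commr_sym/comm_xY.
by rewrite big_nat1 summand0 piM; reflexivity.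
Qed.

Lemma diamond_ratH p s a : diamond_is eta (ratH n p s) a (tmul (ratH n p s) a) /\
  diamond_is eta a (ratH n p s) (tmul a (ratH n p s)).
Proof.
split; apply: (@diamond_is_truncated 1);
  try by rewrite big_nat1 summand0 piM; reflexivity.
- move=> k k_gt0; apply: summand_II_ridealizer k_gt0 _.
  by rewrite rpredM ?ratH_ridealizer_Y ?phiH_ridealizer_Y.
- by move=> k k_gt0; exact: summand_II_lidealizer k_gt0 (ratH_lidealizer_X p s).
Qed.

Lemma diamond_dg i j : diamond_is eta (td i) (tg j)
  (tsub (tmul (td i) (tg j)) (tmul (tmul (phiH n (-1) 1) (glow eta i)) (dup eta j))).
Proof.
apply: (@diamond_is_truncated 2) => [k|]; first exact: summand_II_X (X2g_lideal j).
have dphi := mul_d_phiH i 0 1; rewrite sub0r in dphi.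
rewrite big_nat_recr //= big_nat1 summand0 !expr1.
(* [piM] must be instantiated: it would also unfold [phiH n 0 1] and [Yterm]. *)
rewrite piB (piM _ (td i)) (piM _ (tmul _ _)) (piM _ (phiH _ _ _)).
by rewrite (summand_dg1 j dphi (phiH_ridealizer_Y _ _)); reflexivity.
Qed.

Lemma diamond_gg i j : diamond_is eta (tg i) (tg j)
  (tsub (tmul (tg i) (tg j)) (tscale 2 (tmul (tmul (phiH n 0 1) (tx i)) (dup eta j)))).
Proof.
apply: (@diamond_is_truncated 2) => [k|]; first exact: summand_II_X (X2g_lideal j).
rewrite big_nat_recr //= big_nat1 summand0 !expr1.
rewrite piB piZ (piM _ (tg i)) (piM _ (tmul _ _)) (piM _ (phiH _ _ _)).
rewrite (summand_gg1 j (comm_g_phiH i 0 1) (phiH_ridealizer_Y _ _)).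
by rewrite rmorphN mulNr; reflexivity.
Qed.

Lemma diamond_dx i j : diamond_is eta (td i) (tx j)
  (tadd (tsub (tmul (td i) (tx j))
              (tscale (1/2) (tmul (tmul (phiH n (-1) 1) (glow eta i)) (tg j))))
        (tmul (tmul (phiH n (-1) 2) (xlow eta i)) (dup eta j))).
Proof.
apply: (@diamond_is_truncated 3) => [k|]; first exact: summand_II_X (X3x_lideal j).
have dphi1 := mul_d_phiH i 0 1; have dphi2 := mul_d_phiH i 0 2.
rewrite sub0r in dphi1 dphi2.
rewrite big_nat_recr //= big_nat_recr //= big_nat1 summand0 !expr1.
rewrite piD piB piZ (piM _ (td i)) (piM _ (tmul _ _) (tg j)).
rewrite (piM _ (phiH _ _ _) (glow _ _)) (piM _ (tmul _ _) (dup _ _)).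
rewrite (piM _ (phiH _ _ _) (xlow _ _)).
rewrite (summand_dx1 j dphi1 (phiH_ridealizer_Y _ _)).
rewrite (summand_dx2 j dphi2 (phiH_ridealizer_Y _ _)).
by rewrite mulNr rmorphN mulNr; reflexivity.
Qed.

Lemma diamond_gx i j : diamond_is eta (tg i) (tx j)
  (tsub (tmul (tg i) (tx j)) (tmul (tmul (phiH n 0 1) (tx i)) (tg j))).
Proof.
apply: (@diamond_is_truncated 2) => [k le2k|].
  have [L gPY] := gY2_rideal (comm_g_phiH i 0 k) (phiH_ridealizer_Y 0 k).
  exact: summand_II_Y gPY le2k.
rewrite big_nat_recr //= big_nat1 summand0 !expr1.
rewrite piB (piM _ (tg i)) (piM _ (tmul _ _)) (piM _ (phiH _ _ _)).
by rewrite (summand_gx1 j (comm_g_phiH i 0 1) (phiH_ridealizer_Y _ _)); reflexivity.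
Qed.

End WeylCliffordComputations.

Theorem proposition4p1 (n : nat) (eta : 'M[algC]_n)
    (hn : (0 < n)%N) (eta_sym : eta^T = eta) (eta_inv : eta \in unitmx) :
  (forall (a : term n) (j : 'I_n),
      diamond_is eta a (td j) (tmul a (td j))) /\
  (forall (a : term n) (i : 'I_n),
      diamond_is eta (tx i) a (tmul (tx i) a)) /\
  (forall i j : 'I_n,
      diamond_is eta (td i) (tg j)
        (tsub (tmul (td i) (tg j))
              (tmul (tmul (@phiH n (-1) 1) (glow eta i)) (dup eta j)))) /\
  (forall i j : 'I_n,
      diamond_is eta (tg i) (tg j)
        (tsub (tmul (tg i) (tg j))
              (tscale 2 (tmul (tmul (@phiH n 0 1) (tx i)) (dup eta j))))) /\
  (forall i j : 'I_n,
      diamond_is eta (td i) (tx j)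
        (tadd (tsub (tmul (td i) (tx j))
                    (tscale (1/2) (tmul (tmul (@phiH n (-1) 1) (glow eta i)) (tg j))))
              (tmul (tmul (@phiH n (-1) 2) (xlow eta i)) (dup eta j)))) /\
  (forall i j : 'I_n,
      diamond_is eta (tg i) (tx j)
        (tsub (tmul (tg i) (tx j))
              (tmul (tmul (@phiH n 0 1) (tx i)) (tg j)))) /\
  (forall (p : {poly algC}) (s : seq int) (a : term n),
      diamond_is eta (@ratH n p s) a (tmul (@ratH n p s) a) /\
      diamond_is eta a (@ratH n p s) (tmul a (@ratH n p s))).
Proof.
split; first exact: diamond_d.
split; first exact: diamond_x.
split; first exact: (diamond_dg eta_sym).
split; first exact: (diamond_gg eta_sym eta_inv).
split; first exact: (diamond_dx eta_sym eta_inv).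
split; first exact: (diamond_gx eta_inv).
exact: diamond_ratH.
Qed.
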